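(* Let \((X,d)\) be a metric space. The following statements are equivalent: (i) \(d\) is an ultrametric, i.e. \(d(x,y)\le\max\{d(x,z),d(z,y)\}\) for all \(x,y,z\in X\); (ii) \(f\circ d\) is a metric on \(X\) for every amenable and increasing function \(f\colon[0,\infty)\to[0,\infty)\); (iii) \(f\circ d\) is a metric on \(X\) for every amenable function \(f\colon[0,\infty)\to[0,\infty)\) which satisfies \(f(a)\le 2f(b)\) whenever \(0\le a\le b\).
   Context: A function \(f\colon[0,\infty)\to[0,\infty)\) is amenable if \(f^{-1}(\{0\})=\{0\}\), and increasing if \(a\ge b\) implies \(f(a)\ge f(b)\). *)

From Stdlib Require Import Reals.
Open Scope R_scope.

Definition is_metric (X : Type) (d : X -> X -> R) : Prop :=
  (forall x y, 0 <= d x y) /\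
  (forall x y, d x y = 0 <-> x = y) /\
  (forall x y, d x y = d y x) /\
  (forall x y z, d x y <= d x z + d z y).

Definition is_ultrametric_ineq (X : Type) (d : X -> X -> R) : Prop :=
  forall x y z, d x y <= Rmax (d x z) (d z y).

(* A function f : [0,oo) -> [0,oo) is represented by f : R -> R mapping
   [0,oo) into [0,oo); its values on negative reals are irrelevant. *)
Definition maps_nonneg (f : R -> R) : Prop :=
  forall t, 0 <= t -> 0 <= f t.

Definition amenable (f : R -> R) : Prop :=
  forall t, 0 <= t -> (f t = 0 <-> t = 0).

Definition increasing_nonneg (f : R -> R) : Prop :=
  forall a b, 0 <= b -> b <= a -> f b <= f a.

Definition quasi_increasing2 (f : R -> R) : Prop :=
  forall a b, 0 <= a -> a <= b -> f a <= 2 * f b.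

(** Every triangle of an ultrametric space is isosceles with its two longest
    sides equal, so the image of the longest side under [f] is at most
    [2 f(b) = f(b) + f(c)], where [b = c] are the two other sides; this
    only needs [f a <= 2 f b] for [a <= b], which increasing functions
    satisfy.  Conversely, if [d x y > m := max (d x z) (d z y)], the
    increasing amenable step function taking the values [0, 1, 3] on
    [{0}], [(0, m]] and [(m, oo)] breaks the triangle inequality [3 <= 1 + 1]. *)

From Stdlib Require Import Reals Lra.
Open Scope R_scope.

Lemma increasing_nonneg_quasi_increasing2 (f : R -> R) :
  maps_nonneg f -> increasing_nonneg f -> quasi_increasing2 f.
Proof.
  intros f_ge0 f_inc a b a_ge0 ab.
  pose proof (f_inc b a a_ge0 ab). pose proof (f_ge0 b (Rle_trans _ _ _ a_ge0 ab)).
  lra.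
Qed.

Lemma quasi_increasing2_isosceles_triangle (f : R -> R) (a b c : R) :
  maps_nonneg f -> quasi_increasing2 f -> 0 <= a -> 0 <= b -> 0 <= c ->
  a <= Rmax b c -> b <= Rmax a c -> c <= Rmax a b ->
  f a <= f b + f c.
Proof.
  intros f_ge0 f_qinc a_ge0 b_ge0 c_ge0 a_max b_max c_max.
  pose proof (f_ge0 b b_ge0). pose proof (f_ge0 c c_ge0).
  apply Rmax_Rle in a_max, b_max, c_max.
  destruct (Rlt_le_dec b a) as [ba | ab].
  { replace c with a by lra. lra. }
  destruct (Rlt_le_dec c a) as [ca | ac].
  { replace b with a by lra. lra. }
  replace c with b by lra.
  pose proof (f_qinc a b a_ge0 ab). lra.
Qed.

Lemma ultrametric_comp_metric (X : Type) (d : X -> X -> R) (f : R -> R) :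
  is_metric X d -> is_ultrametric_ineq X d ->
  maps_nonneg f -> amenable f -> quasi_increasing2 f ->
  is_metric X (fun x y => f (d x y)).
Proof.
  intros [d_ge0 [d_eq0 [d_sym _]]] d_ultra f_ge0 f_amen f_qinc.
  split; [| split; [| split]].
  - intros x y. apply f_ge0, d_ge0.
  - intros x y. etransitivity; [apply f_amen, d_ge0 | apply d_eq0].
  - intros x y. rewrite d_sym. reflexivity.
  - intros x y z. apply quasi_increasing2_isosceles_triangle; auto.
    + rewrite (d_sym z y). apply d_ultra.
    + rewrite Rmax_comm, <- (d_sym z x). apply d_ultra.
Qed.

Definition step_fun (m t : R) : R :=
  if Rle_dec t 0 then 0 else if Rle_dec t m then 1 else 3.

Lemma step_fun_maps_nonneg (m : R) : maps_nonneg (step_fun m).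
Proof.
  intros t _. unfold step_fun. destruct Rle_dec; [lra |]. destruct Rle_dec; lra.
Qed.

Lemma step_fun_amenable (m : R) : amenable (step_fun m).
Proof.
  intros t t_ge0. unfold step_fun.
  destruct Rle_dec; [lra |]. destruct Rle_dec; split; intros; lra.
Qed.

Lemma step_fun_increasing (m : R) : increasing_nonneg (step_fun m).
Proof.
  intros a b _ ba. unfold step_fun.
  destruct (Rle_dec b 0), (Rle_dec a 0), (Rle_dec b m), (Rle_dec a m); lra.
Qed.

Lemma step_fun_le1 (m t : R) : t <= m -> step_fun m t <= 1.
Proof.
  intros tm. unfold step_fun. destruct Rle_dec; [lra |]. destruct Rle_dec; lra.
Qed.

Lemma step_fun_gt (m t : R) : 0 <= m -> m < t -> step_fun m t = 3.
Proof.
  intros m_ge0 mt. unfold step_fun. destruct Rle_dec; [lra |]. destruct Rle_dec; lra.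
Qed.

Lemma comp_metric_increasing_ultrametric (X : Type) (d : X -> X -> R) :
  is_metric X d ->
  (forall f : R -> R, maps_nonneg f -> amenable f -> increasing_nonneg f ->
     is_metric X (fun x y => f (d x y))) ->
  is_ultrametric_ineq X d.
Proof.
  intros [d_ge0 _] comp_metric x y z.
  set (m := Rmax (d x z) (d z y)).
  destruct (Rle_lt_dec (d x y) m) as [ultra | m_lt]; [exact ultra | exfalso].
  assert (m_ge0 : 0 <= m) by (apply (Rle_trans _ _ _ (d_ge0 x z)), Rmax_l).
  destruct (comp_metric (step_fun m) (step_fun_maps_nonneg m)
              (step_fun_amenable m) (step_fun_increasing m))
    as [_ [_ [_ triangle]]].
  specialize (triangle x y z). simpl in triangle.
  rewrite (step_fun_gt m _ m_ge0 m_lt) in triangle.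
  pose proof (step_fun_le1 m _ (Rmax_l (d x z) (d z y))).
  pose proof (step_fun_le1 m _ (Rmax_r (d x z) (d z y))).
  lra.
Qed.

Theorem theorem2p12 (X : Type) (d : X -> X -> R) (hd : is_metric X d) :
  (is_ultrametric_ineq X d <->
     (forall f : R -> R, maps_nonneg f -> amenable f -> increasing_nonneg f ->
        is_metric X (fun x y => f (d x y)))) /\
  (is_ultrametric_ineq X d <->
     (forall f : R -> R, maps_nonneg f -> amenable f -> quasi_increasing2 f ->
        is_metric X (fun x y => f (d x y)))).
Proof.
  split; split.
  - intros d_ultra f f_ge0 f_amen f_inc.
    apply ultrametric_comp_metric; auto using increasing_nonneg_quasi_increasing2.
  - apply comp_metric_increasing_ultrametric, hd.
  - intros d_ultra f. apply ultrametric_comp_metric; assumption.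
  - intros comp_metric. apply comp_metric_increasing_ultrametric; [exact hd |].
    intros f f_ge0 f_amen f_inc.
    apply comp_metric; auto using increasing_nonneg_quasi_increasing2.
Qed.
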